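(* Let $H\in\mathbb{R}^{n\times n}$ and $M\in\mathbb{R}^{m\times m}$ be symmetric positive semidefinite and $A\in\mathbb{R}^{m\times n}$. Let $l\neq k$ be indices and $\mathcal{B}\subseteq\{1,\dots,n\}\setminus\{l,k\}$. Assume that the linear system in the unknowns $(\Delta x_l,\Delta x_k,\Delta x_{\mathcal{B}},\Delta y,\Delta z_l)$ \[ \begin{aligned} h_{ll}\Delta x_l+h_{kl}\Delta x_k+h_{\mathcal{B}l}^T\Delta x_{\mathcal{B}}-a_l^T\Delta y-\Delta z_l&=0,\\ h_{kl}\Delta x_l+h_{kk}\Delta x_k+h_{\mathcal{B}k}^T\Delta x_{\mathcal{B}}-a_k^T\Delta y&=0,\\ h_{\mathcal{B}l}\Delta x_l+h_{\mathcal{B}k}\Delta x_k+H_{\mathcal{B}\mathcal{B}}\Delta x_{\mathcal{B}}-A_{\mathcal{B}}^T\Delta y&=0,\\ a_l\Delta x_l+a_k\Delta x_k+A_{\mathcal{B}}\Delta x_{\mathcal{B}}+M\Delta y&=0,\\ \Delta x_l+\Delta z_l&=1 \end{aligned} \] has a unique solution, and that in it $\Delta x_k\neq 0$. Then the matrices \[ K_l=\begin{pmatrix}h_{ll}&h_{\mathcal{B}l}^T&a_l^T\\ h_{\mathcal{B}l}&H_{\mathcal{B}\mathcal{B}}&A_{\mathcal{B}}^T\\ a_l&A_{\mathcal{B}}&-M\end{pmatrix}\quad\text{and}\quad K_k=\begin{pmatrix}h_{kk}&h_{\mathcal{B}k}^T&a_k^T\\ h_{\mathcal{B}k}&H_{\mathcal{B}\mathcal{B}}&A_{\mathcal{B}}^T\\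 a_k&A_{\mathcal{B}}&-M\end{pmatrix} \] are nonsingular.
   Context: $h_{ij}$ denotes the $(i,j)$ entry of $H$; $h_{\mathcal{B}j}$ the column vector $(h_{ij})_{i\in\mathcal{B}}$; $H_{\mathcal{B}\mathcal{B}}$ the principal submatrix of $H$ with rows and columns in $\mathcal{B}$; $a_j$ the $j$th column of $A$; $A_{\mathcal{B}}$ the matrix of columns of $A$ indexed by $\mathcal{B}$. *)

From HB Require Import structures.
From mathcomp Require Import all_boot all_order all_algebra.
Set Implicit Arguments. Unset Strict Implicit. Unset Printing Implicit Defensive.
Import Order.TTheory GRing.Theory Num.Theory.
Local Open Scope ring_scope.

Definition sym_psd (R : realFieldType) (n : nat) (H : 'M[R]_n) : Prop :=
  H^T = H /\ forall x : 'cV[R]_n, 0 <= (x^T *m H *m x) 0 0.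

Section Blocks.
Variables (R : realFieldType) (n m : nat).
Variables (H : 'M[R]_n) (M : 'M[R]_m) (A : 'M[R]_(m, n)) (B : {set 'I_n}).

(* the elements of B, in increasing order *)
Definition Bidx (i : 'I_#|B|) : 'I_n := enum_val i.

Definition HBB : 'M[R]_#|B| := \matrix_(i, j) H (Bidx i) (Bidx j).
Definition hB (j : 'I_n) : 'cV[R]_#|B| := \col_i H (Bidx i) j.
Definition AB : 'M[R]_(m, #|B|) := \matrix_(i, j) A i (Bidx j).
Definition acol (j : 'I_n) : 'cV[R]_m := col j A.

Definition Kmat (j : 'I_n) : 'M[R]_(1 + #|B| + m) :=
  block_mx (block_mx (H j j)%:M (hB j)^T (hB j) HBB)
           (col_mx (acol j)^T AB^T)
           (row_mx (acol j) AB)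
           (- M).

Definition lin_sys (l k : 'I_n) (dxl dxk : R) (dxB : 'cV[R]_#|B|)
    (dy : 'cV[R]_m) (dzl : R) : Prop :=
  [/\ H l l * dxl + H k l * dxk + ((hB l)^T *m dxB) 0 0
        - ((acol l)^T *m dy) 0 0 - dzl = 0,
      H k l * dxl + H k k * dxk + ((hB k)^T *m dxB) 0 0
        - ((acol k)^T *m dy) 0 0 = 0,
      dxl *: hB l + dxk *: hB k + HBB *m dxB - AB^T *m dy = 0,
      dxl *: acol l + dxk *: acol k + AB *m dxB + M *m dy = 0
    & dxl + dzl = 1].
End Blocks.

Arguments lin_sys [R n m] H M A B l k dxl dxk dxB dy dzl.
Arguments Kmat [R n m] H M A B j.

From HB Require Import structures.
From mathcomp Require Import all_boot all_order all_algebra.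
From mathcomp Require Import ring lra.
Set Implicit Arguments. Unset Strict Implicit. Unset Printing Implicit Defensive.
Import Order.TTheory GRing.Theory Num.Theory.
Local Open Scope ring_scope.

(* Write x = x_l e_l + x_k e_k + E_B x_B.  The system says that
   r = H x - A^T y vanishes at k and on B, that A x + M y = 0 and that
   x_l + r_l = c, with c = 1.  By uniqueness the homogeneous system (c = 0)
   has only the trivial solution and, since the solution has dx_k <> 0,
   rescaling shows that so does every solution with x_k = 0, whatever c.
   A kernel vector (s, x_B, v) of K_j is a saddle point: the quadratic forms
   of H and M vanish at x = s e_j + E_B x_B and at v, hence H x = 0, M v = 0,
   A x = 0 and A^T v vanishes at j and on B.  For j = l, (s, 0, x_B, 0, 0) and
   (0, 0, 0, v, -(A^T v)_l) solve the system with x_k = 0, the latter because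
   (A^T v)_k dx_k = v^T (A dx + M dy) = 0; for j = k, (0, s, x_B, 0, 0) solves
   the homogeneous system. *)

Section Selection.
Variables (R : realFieldType) (n : nat).

Definition unitcV (j : 'I_n) : 'cV[R]_n := delta_mx j 0.

Definition selmx (B : {set 'I_n}) : 'M[R]_(n, #|B|) :=
  \matrix_(p, i) (p == @Bidx n B i)%:R.

Lemma mulmx_sel q (B : {set 'I_n}) (V : 'M[R]_(q, n)) :
  V *m selmx B = \matrix_(p, i) V p (@Bidx n B i).
Proof.
apply/matrixP => p i; rewrite !mxE (bigD1 (@Bidx n B i)) //= mxE eqxx mulr1.
by rewrite big1 ?addr0 // => r /negbTE hr; rewrite mxE hr mulr0.
Qed.

Lemma tr_sel_mulmx q (B : {set 'I_n}) (V : 'M[R]_(n, q)) :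
  (selmx B)^T *m V = \matrix_(i, p) V (@Bidx n B i) p.
Proof.
by rewrite -[V]trmxK -trmx_mul mulmx_sel; apply/matrixP => i p; rewrite !mxE.
Qed.

Lemma tr_unitcV_mulmx q (j : 'I_n) (V : 'M[R]_(n, q)) :
  (unitcV j)^T *m V = row j V.
Proof. by rewrite /unitcV trmx_delta rowE. Qed.

Lemma mxE_unitcV (j : 'I_n) (V : 'cV[R]_n) : V j 0 = ((unitcV j)^T *m V) 0 0.
Proof. by rewrite tr_unitcV_mulmx mxE. Qed.

Lemma mulmx_unitcV (j : 'I_n) (w : 'cV[R]_n) : (w^T *m unitcV j) 0 0 = w j 0.
Proof. by rewrite /unitcV -colE !mxE. Qed.

Lemma unitcV_quad (i j : 'I_n) (V : 'M[R]_n) :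
  ((unitcV i)^T *m V *m unitcV j) 0 0 = V i j.
Proof. by rewrite tr_unitcV_mulmx /unitcV -colE !mxE. Qed.

Lemma hB_sel (H : 'M[R]_n) B j : hB H B j = (selmx B)^T *m H *m unitcV j.
Proof.
by rewrite /unitcV -colE tr_sel_mulmx; apply/matrixP => i z; rewrite !mxE.
Qed.

Lemma HBB_sel (H : 'M[R]_n) B : HBB H B = (selmx B)^T *m H *m selmx B.
Proof. by rewrite mulmx_sel tr_sel_mulmx; apply/matrixP => i z; rewrite !mxE. Qed.

Lemma AB_sel m (A : 'M[R]_(m, n)) B : AB A B = A *m selmx B.
Proof. by rewrite mulmx_sel; apply/matrixP => i z; rewrite !mxE. Qed.

Lemma acol_unitcV m (A : 'M[R]_(m, n)) j : acol A j = A *m unitcV j.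
Proof. by rewrite /acol colE. Qed.

End Selection.

Section Semidefinite.
Variable R : realFieldType.

Lemma psd_quad_eq0 n (H : 'M[R]_n) (x : 'cV[R]_n) :
  sym_psd H -> (x^T *m H *m x) 0 0 = 0 -> H *m x = 0.
Proof.
case=> HT H_ge0 qx0; apply/matrixP => i j; rewrite ord1 [RHS]mxE.
set b := (H *m x) i 0; set c := H i i.
have c_ge0 : 0 <= c by rewrite /c -unitcV_quad; apply: H_ge0.
have quad_ge0 t : 0 <= 2 * t * b + t * t * c.
  have := H_ge0 (x + t *: unitcV R i).
  rewrite [(x + _)^T]linearD /= [(_ *: _)^T]linearZ /= !mulmxDr !mulmxDl.
  have addE (U V : 'M[R]_1) : (U + V) 0 0 = U 0 0 + V 0 0 by rewrite mxE.
  have scaleE a (U : 'M[R]_1) : (a *: U) 0 0 = a * U 0 0 by rewrite mxE.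
  rewrite -!scalemxAl -!scalemxAr !addE !scaleE unitcV_quad qx0.
  rewrite -[(x^T *m H *m _) 0 0]trace_mx11 -mxtrace_tr trace_mx11.
  rewrite !trmx_mul trmxK HT -[(_^T *m H *m x)]mulmxA -!mxE_unitcV -/b -/c.
  by move=> /le_trans; apply; rewrite le_eqVlt; apply/predU1P; left; ring.
(* at t = -b / (c + 1) the quadratic form is negative unless b = 0 *)
pose t := - b / (c + 1).
have ht : t * (c + 1) = - b by rewrite /t mulfVK // gt_eqF // ltr_wpDl.
have := quad_ge0 t; nra.
Qed.

Lemma saddle_kernel n m p (H : 'M[R]_n) (M : 'M[R]_m) (A : 'M[R]_(m, n))
    (E : 'M[R]_(n, p)) (x : 'cV[R]_p) (v : 'cV[R]_m) :
  sym_psd H -> sym_psd M ->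
  block_mx (E^T *m H *m E) (A *m E)^T (A *m E) (- M) *m col_mx x v = 0 ->
  [/\ H *m (E *m x) = 0, M *m v = 0, E^T *m (A^T *m v) = 0
    & A *m (E *m x) = 0].
Proof.
move=> psdH psdM; rewrite mul_block_col => /eqP.
rewrite col_mx_eq0 => /andP[/eqP top /eqP bot].
have topE : E^T *m H *m E *m x = - ((A *m E)^T *m v).
  by apply/eqP; rewrite -addr_eq0 top.
have botE : A *m E *m x = M *m v by apply/eqP; rewrite -subr_eq0 -mulNmx bot.
have quadE : (E *m x)^T *m H *m (E *m x) = - (v^T *m M *m v).
  have -> : (E *m x)^T *m H *m (E *m x) = x^T *m (E^T *m H *m E *m x).
    by rewrite trmx_mul !mulmxA.
  by rewrite topE mulmxN mulmxA -trmx_mul botE trmx_mul psdM.1.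
have [qx0 qv0] : ((E *m x)^T *m H *m (E *m x)) 0 0 = 0 /\
                 (v^T *m M *m v) 0 0 = 0.
  have := psdH.2 (E *m x); have := psdM.2 v.
  rewrite quadE; set q := (v^T *m M *m v) 0 0; rewrite mxE -/q.
  by split; lra.
have Hx0 := psd_quad_eq0 psdH qx0; have Mv0 := psd_quad_eq0 psdM qv0.
split => //; last by rewrite mulmxA botE Mv0.
by rewrite mulmxA -trmx_mul; apply/eqP; rewrite -oppr_eq0 -topE -!mulmxA Hx0 mulmx0.
Qed.

End Semidefinite.

Section Kmat.
Variables (R : realFieldType) (n m : nat).
Variables (H : 'M[R]_n) (M : 'M[R]_m) (A : 'M[R]_(m, n)) (B : {set 'I_n}).

Lemma Kmat_sel j : H^T = H ->
  Kmat H M A B j =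
  block_mx ((row_mx (unitcV R j) (selmx R B))^T *m H *m row_mx (unitcV R j) (selmx R B))
           (A *m row_mx (unitcV R j) (selmx R B))^T
           (A *m row_mx (unitcV R j) (selmx R B)) (- M).
Proof.
move=> HT; rewrite /Kmat tr_row_mx mul_col_mx mul_col_row mul_mx_row tr_row_mx.
rewrite hB_sel HBB_sel AB_sel acol_unitcV !trmx_mul trmxK HT mulmxA.
by congr (block_mx (block_mx _ _ _ _) _ _ _); apply/matrixP => a b;
  rewrite !ord1 unitcV_quad mxE.
Qed.

Lemma Kmat_unitmx j : sym_psd H -> sym_psd M ->
  (forall (s : R) (xB : 'cV[R]_#|B|) (v : 'cV[R]_m),
     H *m (s *: unitcV R j + selmx R B *m xB) = 0 -> M *m v = 0 ->
     (A^T *m v) j 0 = 0 -> (selmx R B)^T *m (A^T *m v) = 0 ->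
     A *m (s *: unitcV R j + selmx R B *m xB) = 0 -> [/\ s = 0, xB = 0 & v = 0]) ->
  Kmat H M A B j \in unitmx.
Proof.
move=> psdH psdM ker0; rewrite -unitmx_tr -row_free_unit.
apply: inj_row_free => r /(congr1 trmx); rewrite trmx_mul trmxK trmx0.
set w := r^T => Kw0.
rewrite (Kmat_sel _ psdH.1) -(vsubmxK w) -(vsubmxK (usubmx w)) in Kw0.
case/(saddle_kernel psdH psdM): Kw0 => Hx0 Mv0 ATv0 Ax0.
rewrite mul_row_col (mx11_scalar (usubmx (usubmx w))) mul_mx_scalar in Hx0 Ax0.
move: ATv0; rewrite tr_row_mx mul_col_mx => /eqP; rewrite col_mx_eq0.
case/andP=> /eqP ATvj /eqP ATvB.
have ATvj0 : (A^T *m dsubmx w) j 0 = 0.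
  by rewrite mxE_unitcV ATvj mxE.
have [s0 xB0 v0] := ker0 _ _ _ Hx0 Mv0 ATvj0 ATvB Ax0.
apply: trmx_inj; rewrite trmx0 -/w -(vsubmxK w) -(vsubmxK (usubmx w)) xB0 v0.
have -> : usubmx (usubmx w) = 0 by apply/matrixP => a b; rewrite !ord1 s0 mxE.
by rewrite !col_mx0.
Qed.

End Kmat.

Section System.
Variables (R : realFieldType) (n m : nat).
Variables (H : 'M[R]_n) (M : 'M[R]_m) (A : 'M[R]_(m, n)) (B : {set 'I_n}).
Variables (l k : 'I_n).
Hypothesis HT : H^T = H.

Definition embed (xl xk : R) (xB : 'cV[R]_#|B|) : 'cV[R]_n :=
  xl *: unitcV R l + xk *: unitcV R k + selmx R B *m xB.

Definition resid (x : 'cV[R]_n) (y : 'cV[R]_m) : 'cV[R]_n := H *m x - A^T *m y.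

Definition kkt_sys xl xk xB y (zl c : R) : Prop :=
  [/\ resid (embed xl xk xB) y l 0 = zl,
      resid (embed xl xk xB) y k 0 = 0,
      (selmx R B)^T *m resid (embed xl xk xB) y = 0,
      A *m embed xl xk xB + M *m y = 0
    & xl + zl = c].

Lemma resid_embed_entry j xl xk xB y :
  resid (embed xl xk xB) y j 0 =
  H j l * xl + H j k * xk + ((hB H B j)^T *m xB) 0 0 - ((acol A j)^T *m y) 0 0.
Proof.
have entryE a b (U V W Z : 'M[R]_1) :
    (a *: U + b *: V + W - Z) 0 0 = a * U 0 0 + b * V 0 0 + W 0 0 - Z 0 0.
  by rewrite !mxE.
rewrite /resid /embed hB_sel acol_unitcV mxE_unitcV mulmxBr !mulmxDr !mulmxA.
rewrite -!scalemxAr !trmx_mul trmxK HT entryE !unitcV_quad !mulmxA.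
by rewrite (mulrC xl) (mulrC xk).
Qed.

Lemma resid_embed_sel xl xk xB y :
  (selmx R B)^T *m resid (embed xl xk xB) y =
  xl *: hB H B l + xk *: hB H B k + HBB H B *m xB - (AB A B)^T *m y.
Proof.
by rewrite /resid /embed !hB_sel HBB_sel AB_sel trmx_mul mulmxBr !mulmxDr
  !mulmxA -!scalemxAr.
Qed.

Lemma mul_embed xl xk xB :
  A *m embed xl xk xB = xl *: acol A l + xk *: acol A k + AB A B *m xB.
Proof. by rewrite !acol_unitcV AB_sel /embed !mulmxDr !scalemxAr mulmxA. Qed.

Lemma lin_sys_kkt xl xk xB y zl :
  lin_sys H M A B l k xl xk xB y zl <-> kkt_sys xl xk xB y zl 1.
Proof.
rewrite /lin_sys /kkt_sys !resid_embed_entry resid_embed_sel mul_embed.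
rewrite [H l k](_ : _ = H k l); last by rewrite -{1}HT mxE.
split; case=> e1 e2 e3 e4 e5; split => //.
- by apply/eqP; rewrite -subr_eq0 e1.
- by rewrite e1 subrr.
Qed.

Lemma embedD xl1 xk1 xB1 xl2 xk2 xB2 :
  embed (xl1 + xl2) (xk1 + xk2) (xB1 + xB2) =
  embed xl1 xk1 xB1 + embed xl2 xk2 xB2.
Proof.
rewrite /embed !scalerDl mulmxDr.
by rewrite (addrACA (_ *: _)) (addrACA (_ + _)).
Qed.

Lemma embedZ a xl xk xB : embed (a * xl) (a * xk) (a *: xB) = a *: embed xl xk xB.
Proof. by rewrite /embed !scalerDr !scalerA scalemxAr. Qed.

Lemma residD x1 x2 y1 y2 : resid (x1 + x2) (y1 + y2) = resid x1 y1 + resid x2 y2.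
Proof. by rewrite /resid !mulmxDr opprD addrACA. Qed.

Lemma residZ a x y : resid (a *: x) (a *: y) = a *: resid x y.
Proof. by rewrite /resid scalerBr !scalemxAr. Qed.

Lemma kkt_sysD xl1 xk1 xB1 y1 zl1 c1 xl2 xk2 xB2 y2 zl2 c2 :
  kkt_sys xl1 xk1 xB1 y1 zl1 c1 -> kkt_sys xl2 xk2 xB2 y2 zl2 c2 ->
  kkt_sys (xl1 + xl2) (xk1 + xk2) (xB1 + xB2) (y1 + y2) (zl1 + zl2) (c1 + c2).
Proof.
rewrite /kkt_sys embedD residD; case=> a1 a2 a3 a4 a5 [b1 b2 b3 b4 b5]; split.
- by rewrite mxE a1 b1.
- by rewrite mxE a2 b2 addr0.
- by rewrite mulmxDr a3 b3 addr0.
- by rewrite mulmxDr (mulmxDr M) addrACA a4 b4 addr0.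
- by rewrite addrACA a5 b5.
Qed.

Lemma kkt_sysZ a xl xk xB y zl c :
  kkt_sys xl xk xB y zl c ->
  kkt_sys (a * xl) (a * xk) (a *: xB) (a *: y) (a * zl) (a * c).
Proof.
rewrite /kkt_sys embedZ residZ; case=> a1 a2 a3 a4 a5; split.
- by rewrite mxE a1.
- by rewrite mxE a2 mulr0.
- by rewrite -scalemxAr a3 scaler0.
- by rewrite -!scalemxAr -scalerDr a4 scaler0.
- by rewrite -mulrDr a5.
Qed.

Section UniqueSolution.
Variables (dxl dxk : R) (dxB : 'cV[R]_#|B|) (dy : 'cV[R]_m) (dzl : R).
Hypothesis dsol : lin_sys H M A B l k dxl dxk dxB dy dzl.
Hypothesis duniq :
  forall (ex el : R) (eB : 'cV[R]_#|B|) (ey : 'cV[R]_m) (ez : R),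
    lin_sys H M A B l k ex el eB ey ez ->
    [/\ ex = dxl, el = dxk, eB = dxB, ey = dy & ez = dzl].
Hypothesis dxk_neq0 : dxk != 0.

Lemma kkt_sys0_eq0 xl xk xB y zl :
  kkt_sys xl xk xB y zl 0 -> [/\ xl = 0, xk = 0, xB = 0, y = 0 & zl = 0].
Proof.
move=> /(kkt_sysD ((lin_sys_kkt _ _ _ _ _).1 dsol)); rewrite addr0.
by move=> /(lin_sys_kkt _ _ _ _ _).2 /duniq [? ? ? ? ?]; split;
  apply: addrI; rewrite addr0; eassumption.
Qed.

Lemma kkt_sys_xk0_eq0 xl xB y zl c :
  kkt_sys xl 0 xB y zl c -> [/\ xl = 0, xB = 0, y = 0 & zl = 0].
Proof.
have [-> /kkt_sys0_eq0 [] //|c_neq0] := eqVneq c 0.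
(* scaled to right-hand side 1 it would be the solution, whose x_k is nonzero *)
move=> /(kkt_sysZ c^-1); rewrite mulr0 mulVf // => /(lin_sys_kkt _ _ _ _ _).2.
by case/duniq=> _ dxk0; move: dxk_neq0; rewrite -dxk0 eqxx.
Qed.

Lemma dual_entry_k_eq0 (v : 'cV[R]_m) : M^T = M -> M *m v = 0 ->
  (A^T *m v) l 0 = 0 -> (selmx R B)^T *m (A^T *m v) = 0 -> (A^T *m v) k 0 = 0.
Proof.
move=> MT Mv0 ATvl ATvB.
have [_ _ _ dprimal _] := (lin_sys_kkt _ _ _ _ _).1 dsol.
have : (v^T *m (A *m embed dxl dxk dxB + M *m dy)) 0 0 = 0.
  by rewrite dprimal mulmx0 mxE.
rewrite mulmxDr !mulmxA -[v^T *m M]trmxK trmx_mul trmxK MT Mv0 trmx0 mul0mx addr0.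
rewrite -[v^T *m A]trmxK trmx_mul trmxK /embed !mulmxDr -!scalemxAr mulmxA.
have -> : (A^T *m v)^T *m selmx R B = ((selmx R B)^T *m (A^T *m v))^T.
  by rewrite [RHS]trmx_mul trmxK.
rewrite ATvB trmx0 mul0mx addr0.
have entryE a b (U V : 'M[R]_1) : (a *: U + b *: V) 0 0 = a * U 0 0 + b * V 0 0.
  by rewrite !mxE.
rewrite entryE !mulmx_unitcV ATvl mulr0 add0r.
by move/eqP; rewrite mulf_eq0 (negbTE dxk_neq0) => /eqP.
Qed.

Lemma dual_eq0 (v : 'cV[R]_m) : M *m v = 0 ->
  (A^T *m v) k 0 = 0 -> (selmx R B)^T *m (A^T *m v) = 0 -> v = 0.
Proof.
move=> Mv0 ATvk ATvB.
have : kkt_sys 0 0 0 v (- (A^T *m v) l 0) (- (A^T *m v) l 0).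
  rewrite /kkt_sys /resid /embed !scale0r mulmx0 !addr0 mulmx0 sub0r add0r.
  rewrite ![(- (A^T *m v)) _ 0]mxE ATvk oppr0 mulmxN ATvB oppr0 Mv0.
  by rewrite mulmx0 addr0.
by case/kkt_sys_xk0_eq0.
Qed.

Lemma Kmat_l_unitmx : sym_psd H -> sym_psd M -> Kmat H M A B l \in unitmx.
Proof.
move=> psdH psdM; apply: Kmat_unitmx => // s xB v Hx0 Mv0 ATvl ATvB Ax0.
have : kkt_sys s 0 xB 0 0 s.
  rewrite /kkt_sys /resid /embed scale0r addr0 !mulmx0 subr0 Hx0 Ax0 addr0.
  by split; rewrite ?mxE ?mulmx0 ?addr0.
case/kkt_sys_xk0_eq0 => s0 xB0 _ _; split => //.
by apply: dual_eq0 => //; apply: dual_entry_k_eq0 => //; case: psdM.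
Qed.

Lemma Kmat_k_unitmx : sym_psd H -> sym_psd M -> Kmat H M A B k \in unitmx.
Proof.
move=> psdH psdM; apply: Kmat_unitmx => // s xB v Hx0 Mv0 ATvk ATvB Ax0.
have : kkt_sys 0 s xB 0 0 0.
  rewrite /kkt_sys /resid /embed scale0r add0r !mulmx0 subr0 Hx0 Ax0 addr0.
  by split; rewrite ?mxE ?mulmx0 ?addr0.
by case/kkt_sys0_eq0 => _ s0 xB0 _ _; split => //; apply: dual_eq0.
Qed.

End UniqueSolution.

End System.

Unset Implicit Arguments.

Theorem proposition9 (R : realFieldType) (n m : nat)
  (H : 'M[R]_n) (M : 'M[R]_m) (A : 'M[R]_(m, n))
  (l k : 'I_n) (B : {set 'I_n}) :
  sym_psd H -> sym_psd M -> l != k -> l \notin B -> k \notin B ->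
  (exists (dxl dxk : R) (dxB : 'cV[R]_#|B|) (dy : 'cV[R]_m) (dzl : R),
     [/\ lin_sys H M A B l k dxl dxk dxB dy dzl,
         (forall (ex el : R) (eB : 'cV[R]_#|B|) (ey : 'cV[R]_m) (ez : R),
            lin_sys H M A B l k ex el eB ey ez ->
            [/\ ex = dxl, el = dxk, eB = dxB, ey = dy & ez = dzl])
       & dxk != 0]) ->
  Kmat H M A B l \in unitmx /\ Kmat H M A B k \in unitmx.
Proof.
move=> psdH psdM _ _ _ [dxl [dxk [dxB [dy [dzl [dsol duniq dxk_neq0]]]]]].
split.
- exact: (Kmat_l_unitmx psdH.1 dsol duniq dxk_neq0 psdH psdM).
- exact: (Kmat_k_unitmx psdH.1 dsol duniq dxk_neq0 psdH psdM).
Qed.
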